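(* Let $(G,M,\Delta)$ be a Garside structure and $(H,N,\delta)$ a parabolic substructure with $H\neq G$ and $H\neq\{1\}$. Let $\mathcal S=\mathrm{Div}(\Delta)\setminus\{1\}$ and $d$ the word metric on $G$ with respect to $\mathcal S$. Then $G$ does not have bounded projections on $H$: there is no constant $K>0$ such that $\mathrm{diam}(\pi_H(\alpha_1)\cup\pi_H(\alpha_2))\le K$ for all $\alpha_1,\alpha_2\in G$ with $d(\alpha_1,\alpha_2)=1$.
   Context: Let $G$ be a group and $M$ a submonoid with $M\cap M^{-1}=\{1\}$. Define $\alpha\le_L\beta$ iff $\alpha^{-1}\beta\in M$, and $\alpha\le_R\beta$ iff $\beta\alpha^{-1}\in M$. For $a\in M$ let $\mathrm{Div}_L(a)=\{b\in M: b\le_L a\}$, $\mathrm{Div}_R(a)=\{b\in M: b\le_R a\}$; $a$ is balanced if these coincide, and then $\mathrm{Div}(a)$ denotes this set. $M$ is Noetherian if each $a\in M$ admits an $n$ such that $a$ is not a product of more than $n$ non-trivial factors. A Garside structure $(G,M,\Delta)$: $\Delta\in M$ balanced, $M$ Noetherian, $\mathrm{Div}(\Delta)$ finite and generating $M$ as a monoid and $G$ as a group, $(G,\le_L)$ a lattice. A parabolic substructure $(H,N,\delta)$: $\delta\in M$ balanced, $H$ (resp. $N$) the subgroup (resp. submonoid) generated by $\mathrm{Div}(\delta)$, and $\mathrm{Div}(\delta)=\mathrm{Div}(\Delta)\cap N$. $d(\alpha,\beta)=\lg(\alpha^{-1}\beta)$ with $\lg$ word length w.r.t. $\mathcal S$;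 $d(\alpha,H)=\min_{\beta\in H}d(\alpha,\beta)$; $\pi_H(\alpha)=\{\beta\in H: d(\alpha,\beta)=d(\alpha,H)\}$; $\mathrm{diam}(X)=\max\{d(\alpha,\beta):\alpha,\beta\in X\}$. *)

From HB Require Import structures.
From Stdlib Require Import ClassicalEpsilon.
From mathcomp Require Import all_boot.

Set Implicit Arguments.
Unset Strict Implicit.
Unset Printing Implicit Defensive.

Local Open Scope group_scope.

Section Garside.
Variable G : groupType.

Definition is_submonoid (M : G -> Prop) : Prop :=
  M 1 /\ (forall a b, M a -> M b -> M (a * b)).

Definition pointed (M : G -> Prop) : Prop :=
  forall a, M a -> M a^-1 -> a = 1.

Definition leL (M : G -> Prop) (a b : G) : Prop := M (a^-1 * b).
Definition leR (M : G -> Prop) (a b : G) : Prop := M (b * a^-1).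

(** Div_L(a) and Div_R(a): [DivL M a b] means b \in Div_L(a). *)
Definition DivL (M : G -> Prop) (a b : G) : Prop := M b /\ leL M b a.
Definition DivR (M : G -> Prop) (a b : G) : Prop := M b /\ leR M b a.

Definition balanced (M : G -> Prop) (a : G) : Prop :=
  M a /\ (forall b, DivL M a b <-> DivR M a b).

(** Div(a) for a balanced a (the common value of Div_L(a) = Div_R(a)). *)
Definition Div (M : G -> Prop) (a b : G) : Prop := DivL M a b.

Definition noetherian (M : G -> Prop) : Prop :=
  forall a, M a -> exists n : nat,
    forall w : seq G, (forall x, x \in w -> M x /\ x <> 1) ->
      \prod_(x <- w) x = a -> size w <= n.

Definition gen_monoid (X : G -> Prop) (g : G) : Prop :=
  exists w : seq G, (forall x, x \in w -> X x) /\ g = \prod_(x <- w) x.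

Definition gen_group (X : G -> Prop) (g : G) : Prop :=
  exists w : seq G, (forall x, x \in w -> X x \/ X x^-1) /\ g = \prod_(x <- w) x.

Definition finite_set (X : G -> Prop) : Prop :=
  exists s : seq G, forall x, X x -> x \in s.

Definition is_lattice (le : G -> G -> Prop) : Prop :=
  forall a b : G,
    (exists m, le m a /\ le m b /\ (forall c, le c a -> le c b -> le c m)) /\
    (exists j, le a j /\ le b j /\ (forall c, le a c -> le b c -> le j c)).

Definition garside_structure (M : G -> Prop) (Delta : G) : Prop :=
  is_submonoid M /\ pointed M /\
  balanced M Delta /\ noetherian M /\
  finite_set (Div M Delta) /\
  (forall g, M g <-> gen_monoid (Div M Delta) g) /\
  (forall g, gen_group (Div M Delta) g) /\
  is_lattice (leL M).

Definition para_group (M : G -> Prop) (delta : G) : G -> Prop :=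
  gen_group (Div M delta).
Definition para_monoid (M : G -> Prop) (delta : G) : G -> Prop :=
  gen_monoid (Div M delta).

(** Parabolic substructure (H, N, delta) of (G, M, Delta), with
    H = para_group M delta and N = para_monoid M delta. *)
Definition parabolic_substructure (M : G -> Prop) (Delta delta : G) : Prop :=
  M delta /\ balanced M delta /\
  (forall b, Div M delta b <-> (Div M Delta b /\ para_monoid M delta b)).

Definition garside_gens (M : G -> Prop) (Delta : G) (x : G) : Prop :=
  Div M Delta x /\ x <> 1.

Definition word_of_len (S : G -> Prop) (g : G) (n : nat) : Prop :=
  exists w : seq G, size w = n /\ (forall x, x \in w -> S x \/ S x^-1) /\
                    g = \prod_(x <- w) x.

(** Word length lg w.r.t. S: the least such n (arbitrary if g is not
    generated by S, which never happens for a generating set). *)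
Definition lg (S : G -> Prop) (g : G) : nat :=
  epsilon (inhabits 0%N)
    (fun n => word_of_len S g n /\ forall m, word_of_len S g m -> n <= m).

Definition wdist (S : G -> Prop) (a b : G) : nat := lg S (a^-1 * b).

Definition proj (S : G -> Prop) (H : G -> Prop) (a b : G) : Prop :=
  H b /\ forall b', H b' -> wdist S a b <= wdist S a b'.

Definition diam_le (S : G -> Prop) (X : G -> Prop) (K : nat) : Prop :=
  forall x y, X x -> X y -> wdist S x y <= K.

End Garside.

(* The powers [δ^0, ..., δ^m] all lie in [π_H(Δ^m)]: the element [Δ^-m δ^k] is a
   word of length [m] in [Div(Δ)], whereas [Δ^-m h] has length at least [m] for
   every [h ∈ H], since a shorter word would make [Δ] left-divide an element of [N]
   and hence force [Δ = δ].  So the neighbours [Δ^m] and [Δ^m δ] have projections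
   of unbounded diameter: [δ] has infinite order while balls of the word metric
   are finite. *)

From HB Require Import structures.
From Stdlib Require Import ClassicalEpsilon Classical Wf_nat.
From mathcomp Require Import all_boot zify.

Set Implicit Arguments.
Unset Strict Implicit.
Unset Printing Implicit Defensive.

Local Open Scope group_scope.

Section Words.
Variables (G : groupType) (S : G -> Prop).

Lemma word_of_len0 : word_of_len S 1 0.
Proof. by exists [::]; rewrite big_nil. Qed.

Lemma word_of_len_letter x : S x \/ S x^-1 -> word_of_len S x 1.
Proof.
move=> Sx; exists [:: x]; split=> //; split; last by rewrite big_seq1.
by move=> y; rewrite mem_seq1 => /eqP ->.
Qed.

Lemma word_of_len_cat g1 g2 l1 l2 :
  word_of_len S g1 l1 -> word_of_len S g2 l2 -> word_of_len S (g1 * g2) (l1 + l2).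
Proof.
move=> [w1 [<- [S1 ->]]] [w2 [<- [S2 ->]]].
exists (w1 ++ w2); split; first by rewrite size_cat.
split; last by rewrite big_cat.
by move=> x; rewrite mem_cat => /orP [/S1 | /S2].
Qed.

Lemma word_of_len_conj y g l : (forall x, S x -> S (x ^ y)) ->
  word_of_len S g l -> word_of_len S (g ^ y) l.
Proof.
move=> Sy [w [<- [Sw ->]]]; exists [seq x ^ y | x <- w].
split; first by rewrite size_map.
split; last by rewrite conjg_prod big_map.
move=> _ /mapP [x /Sw [Sx | Sx] ->]; first by left; apply: Sy.
by right; rewrite -conjVg; apply: Sy.
Qed.

Lemma word_of_len_drop1 g l : word_of_len S g l ->
  exists2 l', l' <= l & word_of_len (fun x => S x /\ x <> 1) g l'.
Proof.
move=> [w [<- [Sw ->]]]; exists (size [seq x <- w | x != 1]).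
  by rewrite size_filter count_size.
exists [seq x <- w | x != 1]; split=> //; split; last first.
  by rewrite big_filter; apply/esym/big_rmcond => x /negbNE/eqP.
move=> x; rewrite mem_filter => /andP [/eqP x1 /Sw [Sx | Sx]]; [left | right] => //.
by split=> // /eqP; rewrite invg_eq1 => /eqP.
Qed.

Lemma lg_spec g : (exists n, word_of_len S g n) ->
  word_of_len S g (lg S g) /\ forall m, word_of_len S g m -> lg S g <= m.
Proof.
move=> gS.
have [n [[Sn min_n] _]] :=
  dec_inh_nat_subset_has_unique_least_element _ (fun n => classic _) gS.
apply: (epsilon_spec (inhabits 0%N) (fun n => word_of_len S g n /\ _)).
by exists n; split=> // m /min_n /leP.
Qed.

Lemma lg_le g l : word_of_len S g l -> lg S g <= l.
Proof. by move=> Sl; apply: (proj2 (lg_spec (ex_intro _ l Sl))). Qed.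

Lemma lg_letter x : S x -> x <> 1 -> lg S x = 1%N.
Proof.
move=> Sx x1; have Sx1 := word_of_len_letter (or_introl Sx).
have [[w [sw [_ Ex]]] _] := lg_spec (ex_intro _ 1%N Sx1).
have := lg_le Sx1; case: (lg S x) sw => [|[|//]] // /size0nil wnil.
by move: Ex; rewrite wnil big_nil.
Qed.

Lemma word_ball_finite (s : seq G) K : (forall x, S x -> x \in s) ->
  exists L : seq G, forall g l, l <= K -> word_of_len S g l -> g \in L.
Proof.
move=> Ss; elim: K => [|K [L LK]].
  exists [:: 1] => g l; rewrite leqn0 => /eqP -> [w [/size0nil -> [_ ->]]].
  by rewrite big_nil mem_seq1.
exists (L ++ [seq x * y | x <- s ++ [seq x^-1 | x <- s], y <- L]) => g [|l] lK.
  by move=> gl; rewrite mem_cat (LK g 0).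
move=> [w [sw [Sw ->]]]; case: w sw Sw => [//|x w [sw] Sw].
rewrite mem_cat big_cons; apply/orP; right.
apply: allpairs_f.
  rewrite mem_cat; case: (Sw x (mem_head _ _)) => [/Ss -> // | /Ss Vx].
  by rewrite -[x]invgK map_f ?orbT.
apply: (LK _ l) => //; exists w; split=> //; split=> // y yw.
by apply: Sw; rewrite in_cons yw orbT.
Qed.

End Words.

Lemma inj_nat_notin (T : eqType) (f : nat -> T) (L : seq T) :
  injective f -> exists2 k, k <= size L & f k \notin L.
Proof.
move=> f_inj; have : ~~ all (fun k => f k \in L) (iota 0 (size L).+1).
  apply/negP => /allP fL.
  have sub : {subset [seq f k | k <- iota 0 (size L).+1] <= L}.
    by move=> _ /mapP [k /fL fk ->].
  have uniq_f : uniq [seq f k | k <- iota 0 (size L).+1] by rewrite map_inj_uniq ?iota_uniq.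
  by have := uniq_leq_size uniq_f sub; rewrite size_map size_iota ltnn.
by rewrite -has_predC => /hasP [k]; rewrite mem_iota ltnS => /andP [_ kL] fk; exists k.
Qed.

Section Monoids.
Variable G : groupType.
Implicit Types (M X : G -> Prop) (e g x y : G).

Lemma gen_monoid_letter X x : X x -> gen_monoid X x.
Proof.
move=> Xx; exists [:: x]; split; last by rewrite big_seq1.
by move=> y; rewrite mem_seq1 => /eqP ->.
Qed.

Lemma gen_monoid_mul X x y : gen_monoid X x -> gen_monoid X y -> gen_monoid X (x * y).
Proof.
move=> [w1 [X1 ->]] [w2 [X2 ->]]; exists (w1 ++ w2); split; last by rewrite big_cat.
by move=> z; rewrite mem_cat => /orP [/X1 | /X2].
Qed.

Lemma gen_monoid_conj X y g : (forall x, X x -> X (x ^ y)) ->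
  gen_monoid X g -> gen_monoid X (g ^ y).
Proof.
move=> Xy [w [Xw ->]]; exists [seq x ^ y | x <- w].
split; last by rewrite conjg_prod big_map.
by move=> _ /mapP [x /Xw Xx ->]; apply: Xy.
Qed.

Lemma submonoid_conj M X y g : (forall x, M x <-> gen_monoid X x) ->
  (forall x, X x -> X (x ^ y)) -> M g -> M (g ^ y).
Proof. by move=> MX Xy /MX /(gen_monoid_conj Xy) /MX. Qed.

Lemma conj_closedX (P : G -> Prop) y n x :
  (forall x, P x -> P (x ^ y)) -> P x -> P (x ^ (y ^+ n)).
Proof.
move=> Py; elim: n => [|n IH] Px; first by rewrite expg0 conjg1.
by rewrite expgSr conjgM; apply/Py/IH.
Qed.

Section Submonoid.
Variable M : G -> Prop.
Hypothesis M_sub : is_submonoid M.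

Lemma submonoid_expg x n : M x -> M (x ^+ n).
Proof.
case: M_sub => M1 MM Mx; elim: n => [|n IH]; first by rewrite expg0.
by rewrite expgS; apply: (MM).
Qed.

Lemma Div_refl e : M e -> Div M e e.
Proof. by split; rewrite // /leL mulVg; case: M_sub. Qed.

Lemma pointed_expg_inj x : pointed M -> M x -> x <> 1 -> injective (fun n => x ^+ n).
Proof.
move=> M_pointed Mx x1.
suff expg_neq i d : x ^+ (i + d.+1) <> x ^+ i.
  move=> i j; case: (ltngtP i j) => // [ij | ji] Eij; exfalso.
    by apply: (expg_neq i (j - i.+1)); rewrite Eij; congr (x ^+ _); lia.
  by apply: (expg_neq j (i - j.+1)); rewrite -Eij; congr (x ^+ _); lia.
rewrite expgnDr -{2}[x ^+ i]mulg1 => /mulgI; rewrite expgS => /mulg1_eq Ex.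
by apply/x1/M_pointed => //; rewrite Ex; apply: submonoid_expg.
Qed.

End Submonoid.

Lemma para_group1 M h : pointed M -> para_group M 1 h -> h = 1.
Proof.
move=> M_pointed [w [Dw ->]]; apply: big1_seq => x /andP [_ /Dw].
have Div1 y : Div M 1 y -> y = 1 by move=> [My]; rewrite /leL mulg1 => /(M_pointed _ My).
by case=> [/Div1 // | /Div1 /eqP]; rewrite invg_eq1 => /eqP.
Qed.

Section Balanced.
Variables (M : G -> Prop) (e : G).
Hypothesis e_bal : balanced M e.

Lemma Div_mulV t : Div M e t -> Div M e (e * t^-1).
Proof.
move=> Dt; have [Mt _] := Dt; have [_ Met] : DivR M e t by apply/(proj2 e_bal).
by split; rewrite // /leL invgM invgK mulgVK.
Qed.

Lemma Div_Vmul t : Div M e t -> Div M e (t^-1 * e).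
Proof. by move=> [Mt Mte]; apply/(proj2 e_bal); split; rewrite // /leR invgM invgK mulVKg. Qed.

Lemma Div_conj t : Div M e t -> Div M e (t ^ e).
Proof. by move=> /Div_Vmul /Div_Vmul; rewrite invgM invgK conjgE mulgA. Qed.

Lemma Div_conjV t : Div M e t -> Div M e (t ^ e^-1).
Proof. by move=> /Div_mulV /Div_mulV; rewrite invgM invgK conjgE invgK. Qed.

Lemma gen_group_expgM h : gen_group (Div M e) h ->
  exists p, gen_monoid (Div M e) (e ^+ p * h).
Proof.
move=> [w [Dw ->]]; elim: w Dw => [|a w IH] Dw.
  by exists 0; exists [::]; rewrite big_nil mulg1.
have [p Dp] := IH (fun x xw => Dw x (mem_behead (s := a :: w) xw)).
have shift b : e ^+ p * (b * \prod_(x <- w) x) = b ^ (e ^+ p)^-1 * (e ^+ p * \prod_(x <- w) x).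
  by rewrite conjgE invgK !mulgA mulgVK.
rewrite big_cons; case: (Dw a (mem_head _ _)) => [Da | /Div_mulV Da].
  exists p; rewrite shift; apply: gen_monoid_mul Dp; apply: gen_monoid_letter.
  by rewrite -expVgn; apply: conj_closedX Da => //; apply: Div_conjV.
exists p.+1; rewrite expgSr -mulgA [e * _]mulgA shift; apply: gen_monoid_mul Dp.
apply: gen_monoid_letter; rewrite -expVgn; apply: conj_closedX; first exact: Div_conjV.
by rewrite invgK in Da.
Qed.

End Balanced.
End Monoids.

Section Garside.
Variables (G : groupType) (M : G -> Prop) (Delta delta : G).
Hypotheses (M_sub : is_submonoid M) (M_pointed : pointed M)
  (Delta_bal : balanced M Delta) (Div_Delta_fin : finite_set (Div M Delta))
  (M_gen : forall g, M g <-> gen_monoid (Div M Delta) g)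
  (G_gen : forall g, gen_group (Div M Delta) g) (M_lattice : is_lattice (leL M)).
Hypotheses (delta_bal : balanced M delta)
  (Div_delta : forall b, Div M delta b <-> Div M Delta b /\ para_monoid M delta b)
  (delta_neq_Delta : delta <> Delta).

Local Notation S := (garside_gens M Delta).

Lemma garside_word_exists g : exists n, word_of_len S g n.
Proof.
have [w Dw] := G_gen g.
have Dg : word_of_len (Div M Delta) g (size w) by exists w.
by have [l _ Sl] := word_of_len_drop1 Dg; exists l.
Qed.

Lemma lg_garside_word g : word_of_len S g (lg S g).
Proof. exact: (proj1 (lg_spec (garside_word_exists g))). Qed.

Lemma lg_garside_le g l : word_of_len (Div M Delta) g l -> lg S g <= l.
Proof. by move=> /word_of_len_drop1 [l' l'l /lg_le lgl']; apply: leq_trans lgl' l'l. Qed.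

Lemma Div_Delta_delta : Div M Delta delta.
Proof. by have [] := proj1 (Div_delta delta) (Div_refl M_sub (proj1 delta_bal)). Qed.

Lemma M_conjV g : M g -> M (g ^ Delta^-1).
Proof. by apply: submonoid_conj M_gen _; apply: Div_conjV. Qed.

Lemma Delta_expgM (T : G -> Prop) g l : (forall x, T x -> Div M Delta x) ->
  word_of_len T g l -> M (Delta ^+ l * g).
Proof.
have [M1 MM] := M_sub; move=> TD [w [<- [Tw ->]]].
elim/last_ind: w Tw => [|w x IH] Tw; first by rewrite big_nil mulg1.
have -> : Delta ^+ size (rcons w x) * \prod_(y <- rcons w x) y =
    (Delta ^+ size w * \prod_(y <- w) y) ^ Delta^-1 * (Delta * x).
  by rewrite size_rcons big_rcons /= expgS conjgE invgK !mulgA mulgVK.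
apply: (MM); first by apply/M_conjV/IH => y yw; apply: Tw; rewrite mem_rcons in_cons yw orbT.
case: (Tw x _); first by rewrite mem_rcons mem_head.
  by move=> /TD [Mx _]; apply: (MM) Mx; case: Delta_bal.
by move=> /TD /(Div_mulV Delta_bal); rewrite invgK => [[]].
Qed.

(* Induction on the word: the join [j] of [x] and the first letter [t] still
   divides [Δ], and [t^-1 j] left-divides the rest of the word. *)
Lemma Div_of_leL_prod w x : (forall t, t \in w -> Div M delta t) ->
  Div M Delta x -> leL M x (\prod_(t <- w) t) -> Div M delta x.
Proof.
have [M1 MM] := M_sub.
elim: w x => [|t w IH] x Dw [Mx le_x_Delta].
  rewrite big_nil /leL mulg1 => /(M_pointed Mx) ->.
  by split; rewrite // /leL invg1 mul1g; case: delta_bal.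
rewrite big_cons => le_x_tP.
have Dt : Div M delta t by apply/Dw/mem_head.
have [DDt _] := proj1 (Div_delta t) Dt.
have MP : M (\prod_(y <- w) y).
  by apply/M_gen; exists w; split=> // y /(mem_behead (s := t :: w)) /Dw /Div_delta [].
have [_ [j [le_xj [le_tj j_min]]]] := M_lattice x t.
have le_j_tP : leL M j (t * \prod_(y <- w) y) by apply: j_min; rewrite // /leL mulKg.
have le_j_Delta : leL M j Delta by apply: j_min => //; case: DDt.
have Mj : M j by rewrite -(mulVKg x j); apply: (MM).
have Dc : Div M Delta (t^-1 * j).
  split=> //; rewrite /leL.
  have -> : (t^-1 * j)^-1 * Delta = (j^-1 * Delta) * t ^ Delta.
    by rewrite invgM invgK conjgE !mulgA mulgK.
  by apply: (MM) => //; have [] := Div_conj Delta_bal DDt.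
have le_c_P : leL M (t^-1 * j) (\prod_(y <- w) y).
  by move: le_j_tP; rewrite /leL invgM invgK mulgA.
have Ddc := IH _ (fun y yw => Dw y (mem_behead (s := t :: w) yw)) Dc le_c_P.
have [_ le_j_delta] : Div M delta j.
  apply/Div_delta; split=> //; rewrite -(mulVKg t j).
  by apply: gen_monoid_mul (gen_monoid_letter Dt) (proj2 (proj1 (Div_delta _) Ddc)).
split=> //; rewrite /leL -(mulVKg j delta) mulgA.
by apply: (MM) => //; rewrite mulgA mulgK.
Qed.

Lemma Delta_not_leL_para_monoid y : para_monoid M delta y -> ~ leL M Delta y.
Proof.
move=> [w [Dw ->]] le_Dw.
have [_ le_Delta_delta] := Div_of_leL_prod Dw (Div_refl M_sub (proj1 Delta_bal)) le_Dw.
have [_ le_delta_Delta] := Div_Delta_delta.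
apply: delta_neq_Delta; have /mulg1_eq : delta^-1 * Delta = 1.
  by apply: M_pointed; rewrite // invgM invgK.
by rewrite invgK.
Qed.

(* A word of length [l < m] for [Δ^-m h] would make [Δ] left-divide [δ^p h ∈ N]. *)
Lemma lg_lower m h : para_group M delta h -> m <= lg S ((Delta ^+ m)^-1 * h).
Proof.
have [_ MM] := M_sub.
move=> Hh; set l := lg S _; rewrite leqNgt; apply/negP => lt_lm.
have Ml : M (Delta ^+ l * ((Delta ^+ m)^-1 * h)).
  exact: (Delta_expgM (fun x => @proj1 _ _) (lg_garside_word _)).
have [p Np] := gen_group_expgM delta_bal Hh.
apply: Delta_not_leL_para_monoid Np _; rewrite /leL.
have Em : Delta ^+ m = Delta * Delta ^+ (m - l.+1) * Delta ^+ l.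
  by rewrite -expgS -expgnDr; congr (_ ^+ _); lia.
have -> : Delta^-1 * (delta ^+ p * h) =
    (delta ^+ p) ^ Delta * Delta ^+ (m - l.+1) * (Delta ^+ l * ((Delta ^+ m)^-1 * h)).
  by rewrite Em conjgE !invgM !mulgA !mulgK.
apply: (MM) Ml; apply: (MM); last exact: submonoid_expg (proj1 Delta_bal).
by rewrite conjXg; apply: submonoid_expg; have [] := Div_conj Delta_bal Div_Delta_delta.
Qed.

Lemma word_upper m k : k <= m ->
  word_of_len (Div M Delta) ((Delta ^+ m)^-1 * delta ^+ k) m.
Proof.
move=> km; have DD := Div_refl M_sub (proj1 Delta_bal).
have wV : word_of_len (Div M Delta) Delta^-1 1.
  by apply: word_of_len_letter; right; rewrite invgK.
have wVd : word_of_len (Div M Delta) (Delta^-1 * delta) 1.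
  apply: word_of_len_letter; right; rewrite invgM invgK.
  exact: (Div_Vmul Delta_bal Div_Delta_delta).
have wVX j : word_of_len (Div M Delta) (Delta ^+ j)^-1 j.
  elim: j => [|j IH]; first by rewrite expg0 invg1; apply: word_of_len0.
  by rewrite expgS invgM -addn1; apply: word_of_len_cat.
have wVXd j : word_of_len (Div M Delta) ((Delta ^+ j)^-1 * delta ^+ j) j.
  elim: j => [|j IH]; first by rewrite !expg0 invg1 mul1g; apply: word_of_len0.
  have -> : (Delta ^+ j.+1)^-1 * delta ^+ j.+1 =
      ((Delta ^+ j)^-1 * delta ^+ j) ^ Delta * (Delta^-1 * delta).
    by rewrite !expgSr invgM conjgE !mulgA mulgK.
  rewrite -addn1; apply: word_of_len_cat wVd; apply: word_of_len_conj IH.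
  exact: Div_conj.
rewrite -(subnK km) {1}addnC expgnDr invgM -mulgA.
exact: word_of_len_cat.
Qed.

Lemma proj_Delta_expg m k : k <= m ->
  proj S (para_group M delta) (Delta ^+ m) (delta ^+ k).
Proof.
move=> km; split.
  exists (nseq k delta); split; last by rewrite big_nseq iter_mulg_1.
  by move=> x /nseqP [-> _]; left; apply/(Div_refl M_sub)/(proj1 delta_bal).
move=> h Hh; apply: leq_trans (lg_lower m Hh).
exact: lg_garside_le (word_upper km).
Qed.

Lemma unbounded_projections : delta <> 1 ->
  ~ exists K, forall a1 a2, wdist S a1 a2 = 1%N ->
      diam_le S (fun b => proj S (para_group M delta) a1 b \/
                          proj S (para_group M delta) a2 b) K.
Proof.
move=> d1 [K HK]; have [s Ds] := Div_Delta_fin.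
have [L LK] := word_ball_finite K (fun x (Sx : S x) => Ds x (proj1 Sx)).
have [k km dkL] := inj_nat_notin L (pointed_expg_inj M_sub M_pointed (proj1 delta_bal) d1).
move/negP: dkL; apply; apply: (LK _ _ _ (lg_garside_word _)).
have near : wdist S (Delta ^+ size L) (Delta ^+ size L * delta) = 1%N.
  by rewrite /wdist mulKg; apply: (lg_letter (conj Div_Delta_delta d1) d1).
have := HK _ _ near 1 (delta ^+ k) (or_introl (proj_Delta_expg (leq0n _)))
  (or_introl (proj_Delta_expg km)).
by rewrite /wdist invg1 mul1g.
Qed.

End Garside.

Theorem corollary5p4 (G : groupType) (M : G -> Prop) (Delta delta : G) :
  garside_structure M Delta ->
  parabolic_substructure M Delta delta ->
  (exists g : G, ~ para_group M delta g) ->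
  (exists h : G, para_group M delta h /\ h <> 1) ->
  ~ (exists K : nat, (0 < K)%N /\
       forall a1 a2 : G,
         wdist (garside_gens M Delta) a1 a2 = 1%N ->
         diam_le (garside_gens M Delta)
           (fun b => proj (garside_gens M Delta) (para_group M delta) a1 b \/
                     proj (garside_gens M Delta) (para_group M delta) a2 b) K).
Proof.
move=> [M_sub [M_pointed [Delta_bal [_ [Div_Delta_fin [M_gen [G_gen M_lattice]]]]]]].
move=> [_ [delta_bal Div_delta]] [g Hg] [h [Hh h1]] [K [_ HK]].
have nD : delta <> Delta by move=> E; apply: Hg; rewrite /para_group E; apply: G_gen.
have d1 : delta <> 1 by move=> E; apply/h1/(para_group1 M_pointed); rewrite -E.
by apply: (unbounded_projections M_sub M_pointed Delta_bal Div_Delta_fin M_gen G_gen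
  M_lattice delta_bal Div_delta nD d1); exists K.
Qed.
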